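(* For every nonnegative integer $n$, \[\sum_{r=0}^n\mathcal{K}_{n;r}(z;q)\Phi_r(1;z;q)=\Phi_n(1;z;q)\qquad\text{and}\qquad\sum_{r=0}^n\mathcal{K}_{n;r}(z/q;q)\Phi_r(u;z;q)=\Phi_n(uz;z;q).\]
   Context: $(a;q)_n=\prod_{j=0}^{n-1}(1-aq^j)$ for $n\ge0$ and $1/(q;q)_n=0$ for $n<0$; $(a,b;q)_n=(a;q)_n(b;q)_n$. For $n,r\in\mathbb{Z}$: \[\Phi_n(u;z;q):=\frac{1-uz-(1-u)zq^n}{(q;q)_n(z;q)_{n+1}},\qquad \mathcal{K}_{n;r}(z;q):=\frac{z^rq^{r^2}}{(q;q)_{n-r}}.\] (Note $\Phi_n(1;z;q)=1/(q,zq;q)_n$.) *)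

From HB Require Import structures.
From mathcomp Require Import all_boot all_order all_algebra.
Set Implicit Arguments. Unset Strict Implicit. Unset Printing Implicit Defensive.
Import Order.TTheory GRing.Theory Num.Theory.
Local Open Scope ring_scope.

Definition qpoch (F : fieldType) (a q : F) (n : nat) : F :=
  \prod_(j < n) (1 - a * q ^+ j).

Definition Phi (F : fieldType) (n : nat) (u z q : F) : F :=
  (1 - u * z - (1 - u) * z * q ^+ n) / (qpoch q q n * qpoch z q n.+1).

(* K_{n;r}(z;q) = z^r q^{r^2} / (q;q)_{n-r}, used only for 0 <= r <= n *)
Definition Kc (F : fieldType) (n r : nat) (z q : F) : F :=
  z ^+ r * q ^+ (r * r) / qpoch q q (n - r).

From HB Require Import structures.
From mathcomp Require Import all_boot all_order all_algebra.
From mathcomp Require Import ring zify.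
Import GRing.Theory.
Local Open Scope ring_scope.

(* Proof idea.  Weighting the kernel by Phi_r(1;w;q) = 1/((q;q)_r (wq;q)_r)
   gives the terms  T_n(w)_r = K_{n;r}(w;q) / ((q;q)_r (wq;q)_r), whose sum is
   the finite q-identity

     (Tsum)   sum_{r=0}^n T_n(w)_r = 1 / ((q;q)_n (wq;q)_n)  = Phi_n(1;w;q).

   (Tsum) is proved by induction on n, for all w at once, from the
   Pascal-type recurrence
     (1 - q^{n+1}) T_{n+1}(w)_{r+1} = T_n(w)_{r+1} + w q^{n+1}/(1-wq) T_n(wq)_r.
   With w = z this is the first identity.  For the second, split
     Phi_r(u;z;q) = Phi_r(0;z;q) - u Psi_r(z;q),
     Psi_r(z;q)  := z (1 - q^r) / ((q;q)_r (z;q)_{r+1});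
   the Phi_r(0) part is (Tsum) at w = z/q, and the Psi part is again (Tsum),
   at w = zq and level n-1, after shifting r by one.  Since
   Phi_n(uz;z;q) = Phi_n(0;z;q) - u z Psi_n(z;q), the second identity follows. *)

Section QPochhammer.
Context {F : fieldType}.
Implicit Types a q : F.

Lemma qpoch0 a q : qpoch a q 0 = 1.
Proof. by rewrite /qpoch big_ord0. Qed.

Lemma qpochS a q n : qpoch a q n.+1 = qpoch a q n * (1 - a * q ^+ n).
Proof. by rewrite /qpoch big_ord_recr. Qed.

Lemma qpochSl a q n : qpoch a q n.+1 = (1 - a) * qpoch (a * q) q n.
Proof.
rewrite /qpoch big_ord_recl expr0 mulr1; congr (_ * _).
by apply: eq_bigr => i _; rewrite /= exprS mulrA.
Qed.

Lemma qpochD a q m p : qpoch a q (m + p) = qpoch a q m * qpoch (a * q ^+ m) q p.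
Proof.
elim: p => [|p IH]; first by rewrite addn0 qpoch0 mulr1.
by rewrite addnS !qpochS IH exprD; ring.
Qed.

Lemma qpoch_neq0_le {a q n m} : qpoch a q n != 0 -> (m <= n)%N -> qpoch a q m != 0.
Proof.
move=> h /subnKC hmn; move: h; rewrite -hmn qpochD mulf_eq0 negb_or.
by case/andP.
Qed.

Lemma qpoch_factor_neq0 {a q n j} :
  qpoch a q n != 0 -> (j < n)%N -> 1 - a * q ^+ j != 0.
Proof.
move=> h hj; have := qpoch_neq0_le h hj.
by rewrite qpochS mulf_eq0 negb_or => /andP[].
Qed.

Lemma qpoch_shift_neq0 {a q n} : qpoch a q n.+1 != 0 -> qpoch (a * q) q n != 0.
Proof. by rewrite qpochSl mulf_eq0 negb_or => /andP[]. Qed.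

Lemma qpoch_head_neq0 {a q n} : qpoch a q n.+1 != 0 -> 1 - a != 0.
Proof. by move=> /qpoch_factor_neq0/(_ (ltn0Sn n)); rewrite expr0 mulr1. Qed.

End QPochhammer.

Section Kernel.
Context {F : fieldType} (q : F).
Implicit Types w : F.

(* The kernel weighted by Phi_r(1;w;q):
   T_n(w)_r = w^r q^{r^2} / ((q;q)_{n-r} (q;q)_r (wq;q)_r). *)
Definition kterm w n r : F := Kc n r w q / (qpoch q q r * qpoch (w * q) q r).

Definition kcoef w n : F := w * q ^+ n.+1 / (1 - w * q).

Lemma kterm_first w n :
  qpoch q q n.+1 != 0 -> (1 - q ^+ n.+1) * kterm w n.+1 0 = kterm w n 0.
Proof.
move=> hP; have hPn := qpoch_neq0_le hP (leqnSn n).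
have hc : 1 - q * q ^+ n != 0 := qpoch_factor_neq0 hP (ltnSn n).
rewrite /kterm /Kc !subn0 !qpoch0 qpochS exprS !expr0 !mul1r.
by field; rewrite !(oner_neq0, hPn, hc).
Qed.

Lemma kterm_last w n :
  qpoch q q n.+1 != 0 -> qpoch (w * q) q n.+1 != 0 ->
  (1 - q ^+ n.+1) * kterm w n.+1 n.+1 = kcoef w n * kterm (w * q) n n.
Proof.
move=> hP hW; have hPn := qpoch_neq0_le hP (leqnSn n).
have hc : 1 - q * q ^+ n != 0 := qpoch_factor_neq0 hP (ltnSn n).
have hwq := qpoch_head_neq0 hW; have hWW := qpoch_shift_neq0 hW.
rewrite /kterm /kcoef /Kc !subnn !qpoch0 qpochS (qpochSl (w * q)).
have -> : (n.+1 * n.+1 = n * n + n + n + 1)%N by lia.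
rewrite !exprD expr1 !exprS exprMn.
move: hc; move: (q ^+ (n * n)) (q ^+ n) => A B hc.
by field; rewrite !(oner_neq0, hPn, hc, hwq, hWW).
Qed.

Lemma kterm_mid w n r :
  qpoch q q n.+1 != 0 -> qpoch (w * q) q n.+1 != 0 -> (r < n)%N ->
  (1 - q ^+ n.+1) * kterm w n.+1 r.+1 =
  kterm w n r.+1 + kcoef w n * kterm (w * q) n r.
Proof.
move=> hP hW hrn.
have [k hn] : exists k, n = (r + k.+1)%N by exists (n - r.+1)%N; lia.
have hPk : qpoch q q k != 0 by apply: (qpoch_neq0_le hP); lia.
have hPr : qpoch q q r != 0 by apply: (qpoch_neq0_le hP); lia.
have hWr : qpoch (w * q * q) q r != 0.
  by apply: (qpoch_neq0_le (qpoch_shift_neq0 hW)); lia.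
have hwq := qpoch_head_neq0 hW.
have hck : 1 - q * q ^+ k != 0 by apply: (qpoch_factor_neq0 hP); lia.
have hcr : 1 - q * q ^+ r != 0 by apply: (qpoch_factor_neq0 hP); lia.
rewrite /kterm /kcoef /Kc.
have -> : (n.+1 - r.+1 = k.+1)%N by lia.
have -> : (n - r.+1 = k)%N by lia.
have -> : (n - r = k.+1)%N by lia.
have -> : (r.+1 * r.+1 = r * r + r + r + 1)%N by lia.
rewrite hn (qpochSl (w * q)) (qpochS q q k) (qpochS q q r).
rewrite !exprD expr1 !exprS ?exprD ?exprS exprMn.
move: hck hcr; move: (q ^+ (r * r)) (q ^+ r) (q ^+ k) => A B C hck hcr.
by field; rewrite !(oner_neq0, hPk, hPr, hck, hcr, hwq, hWr).
Qed.

Lemma ksum_rec w n :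
  qpoch q q n.+1 != 0 -> qpoch (w * q) q n.+1 != 0 ->
  (1 - q ^+ n.+1) * \sum_(0 <= r < n.+2) kterm w n.+1 r =
  \sum_(0 <= r < n.+1) kterm w n r + kcoef w n * \sum_(0 <= r < n.+1) kterm (w * q) n r.
Proof.
move=> hP hW.
have mid : \sum_(0 <= i < n) (1 - q ^+ n.+1) * kterm w n.+1 i.+1 =
    \sum_(0 <= i < n) (kterm w n i.+1 + kcoef w n * kterm (w * q) n i).
  by apply: eq_big_nat => i /andP[_ hi]; apply: kterm_mid.
rewrite big_nat_recl // big_nat_recr //= mulrDr mulrDr mulr_sumr.
rewrite kterm_first // kterm_last // mid big_split -mulr_sumr /=.
rewrite [X in _ = X + _]big_nat_recl // [X in _ = _ + _ * X]big_nat_recr //=.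
by rewrite mulrDr; ring.
Qed.

Lemma ksum_closed n : forall w,
  qpoch q q n != 0 -> qpoch (w * q) q n != 0 ->
  \sum_(0 <= r < n.+1) kterm w n r = (qpoch q q n * qpoch (w * q) q n)^-1.
Proof.
elim: n => [|n IH] w hP hW.
  by rewrite big_nat1 /kterm /Kc subnn muln0 !qpoch0 !expr0 !(mulr1, invr1).
have hc : 1 - q * q ^+ n != 0 := qpoch_factor_neq0 hP (ltnSn n).
have hwq := qpoch_head_neq0 hW; have hWW := qpoch_shift_neq0 hW.
have hwqn : 1 - w * q * q ^+ n != 0 := qpoch_factor_neq0 hW (ltnSn n).
have hPn := qpoch_neq0_le hP (leqnSn n).
have hWn := qpoch_neq0_le hW (leqnSn n).
apply: (mulfI (_ : 1 - q ^+ n.+1 != 0)); first by rewrite exprS.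
rewrite ksum_rec // IH // IH // /kcoef !qpochS.
have -> : qpoch (w * q) q n = (1 - w * q) * qpoch (w * q * q) q n / (1 - w * q * q ^+ n).
  by rewrite -qpochSl qpochS mulfK.
rewrite exprS; move: hc hwqn; move: (q ^+ n) => B hc hwqn.
by field; rewrite !(oner_neq0, hPn, hc, hwq, hwqn, hWW).
Qed.

End Kernel.

Section PhiDecomposition.
Context {F : fieldType}.
Implicit Types z q u : F.

Definition Psi (r : nat) z q : F :=
  z * (1 - q ^+ r) / (qpoch q q r * qpoch z q r.+1).

Lemma Phi_split r u z q : Phi r u z q = Phi r 0 z q - u * Psi r z q.
Proof. by rewrite /Phi /Psi; ring. Qed.

Lemma Phi_one r z q : 1 - z != 0 -> Phi r 1 z q = (qpoch q q r * qpoch (z * q) q r)^-1.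
Proof.
move=> hz; rewrite /Phi qpochSl mul1r subrr !mul0r subr0 mulrCA invfM mulrA.
by rewrite divff // mul1r.
Qed.

Lemma Phi_zero r z q : 1 - z * q ^+ r != 0 -> Phi r 0 z q = (qpoch q q r * qpoch z q r)^-1.
Proof.
move=> hz; rewrite /Phi qpochS mul0r !subr0 mul1r mulrA [_ * (1 - _)]mulrC.
by rewrite invfM mulrA divff // mul1r.
Qed.

End PhiDecomposition.

Section PsiSum.
Context {F : fieldType}.
Variables (q z : F).
Hypothesis hq : q != 0.

Lemma psi_term_shift m s :
  qpoch q q m.+1 != 0 -> qpoch z q m.+2 != 0 -> (s <= m)%N ->
  Kc m.+1 s.+1 (z / q) q * Psi s.+1 z q =
  z * z / ((1 - z) * (1 - z * q)) * kterm q (z * q) m s.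
Proof.
move=> hP hZ hs.
have hPs : qpoch q q s != 0 by apply: (qpoch_neq0_le hP); lia.
have hcs : 1 - q * q ^+ s != 0 by apply: (qpoch_factor_neq0 hP); lia.
have hPms : qpoch q q (m - s) != 0 by apply: (qpoch_neq0_le hP); lia.
have hz1 := qpoch_head_neq0 hZ.
have hz2 : 1 - z * q != 0 by have := qpoch_factor_neq0 hZ (isT : (1 < m.+2)%N); rewrite expr1.
have hZs : qpoch (z * q * q) q s != 0.
  by apply: (qpoch_neq0_le (qpoch_shift_neq0 (qpoch_shift_neq0 hZ))); lia.
have hqs : q ^+ s != 0 by apply: expf_neq0.
rewrite /Psi /kterm /Kc subSS (qpochS q q s) (qpochSl z q s.+1) (qpochSl (z * q) q s).
have -> : (s.+1 * s.+1 = s * s + s + s + 1)%N by lia.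
rewrite expr_div_n !exprD expr1 (exprS q s) (exprS z s) exprMn.
move: hcs hqs; move: (q ^+ s) (q ^+ (s * s)) (z ^+ s) => A B C hcs hqs.
by field; rewrite !(oner_neq0, hq, hPs, hcs, hPms, hZs, hqs, hz1, hz2).
Qed.

Lemma psi_sum n :
  qpoch q q n != 0 -> qpoch z q n.+1 != 0 ->
  \sum_(0 <= r < n.+1) Kc n r (z / q) q * Psi r z q = z * Psi n z q.
Proof.
case: n => [|m] hP hZ.
  by rewrite big_nat1 /Psi !expr0 subrr !(mul0r, mulr0).
have hz1 := qpoch_head_neq0 hZ.
have hz2 : 1 - z * q != 0 by have := qpoch_factor_neq0 hZ (isT : (1 < m.+2)%N); rewrite expr1.
have hPm := qpoch_neq0_le hP (leqnSn m).
have hcm : 1 - q * q ^+ m != 0 := qpoch_factor_neq0 hP (ltnSn m).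
have hZm : qpoch z q m.+1 != 0 := qpoch_neq0_le hZ (leqnSn m.+1).
have hzm : 1 - z * q ^+ m.+1 != 0 := qpoch_factor_neq0 hZ (ltnSn m.+1).
have hZZ : qpoch (z * q * q) q m != 0 := qpoch_shift_neq0 (qpoch_shift_neq0 hZ).
have shift : \sum_(0 <= s < m.+1) Kc m.+1 s.+1 (z / q) q * Psi s.+1 z q =
    z * z / ((1 - z) * (1 - z * q)) * \sum_(0 <= s < m.+1) kterm q (z * q) m s.
  by rewrite mulr_sumr; apply: eq_big_nat => s /andP[_ hs]; apply: psi_term_shift.
rewrite big_nat_recl // shift ksum_closed // /Psi expr0 subrr !(mulr0, mul0r) add0r.
have -> : qpoch (z * q * q) q m =
    qpoch z q m.+1 * (1 - z * q ^+ m.+1) / ((1 - z) * (1 - z * q)).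
  rewrite -qpochS (qpochSl z q m.+1) (qpochSl (z * q) q m).
  by field; rewrite !(oner_neq0, hz1, hz2).
rewrite (qpochS q q m) (qpochS z q m.+1) (exprS q m).
move: hzm hcm; rewrite (exprS q m); move: (q ^+ m) => Q hzm hcm.
by field; rewrite !(oner_neq0, hPm, hcm, hZm, hzm, hz1, hz2).
Qed.

End PsiSum.

Theorem lemma3p3 (F : fieldType) (n : nat) (u z q : F)
  (hq : q != 0) (hqq : qpoch q q n != 0) (hzq : qpoch z q n.+1 != 0) :
  \sum_(0 <= r < n.+1) Kc n r z q * Phi r 1 z q = Phi n 1 z q /\
  \sum_(0 <= r < n.+1) Kc n r (z / q) q * Phi r u z q = Phi n (u * z) z q.
Proof.
have hz1 := qpoch_head_neq0 hzq.
have hzn : 1 - z * q ^+ n != 0 := qpoch_factor_neq0 hzq (ltnSn n).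
have hzqn : qpoch (z / q * q) q n != 0 by rewrite divfK // (qpoch_neq0_le hzq).
split.
  rewrite Phi_one // -ksum_closed //; last exact: qpoch_shift_neq0.
  by apply: eq_bigr => r _; rewrite Phi_one.
have zero_part : \sum_(0 <= r < n.+1) Kc n r (z / q) q * Phi r 0 z q = Phi n 0 z q.
  rewrite Phi_zero //.
  have -> : qpoch z q n = qpoch (z / q * q) q n by rewrite divfK.
  rewrite -ksum_closed //.
  apply: eq_big_nat => r /andP[_ hr].
  by rewrite /kterm divfK // Phi_zero // (qpoch_factor_neq0 hzq).
under eq_bigr do rewrite Phi_split mulrBr.
rewrite sumrB zero_part; under eq_bigr do rewrite mulrCA.
by rewrite -mulr_sumr psi_sum // (Phi_split n (u * z)) mulrA.
Qed.
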